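(* Let $X$ be a real Hilbert space and $h:\Phi_{lsc}^{\mathbb{R}}\to(-\infty,+\infty]$ a proper lower semicontinuous function bounded from below. Let $\gamma>0$ and let $(\phi_n)=((a_n,u_n))$ be generated by the $\Phi_{lsc}^{\mathbb{R}}$-proximal algorithm on $\Phi_{lsc}^{\mathbb{R}}$ described in the context. Then for every $n$ and every $\phi=(a,u)\in\Phi_{lsc}^{\mathbb{R}}$, $$h(\phi)-h(\phi_{n+1})\ge\frac{1}{2\gamma}\big[\|u-u_{n+1}\|^2-\|u-u_n\|^2\big]+\Big(1-\frac{2(a-a_{n+1})}{\gamma}\Big)\frac{\|u_n-u_{n+1}\|^2}{2\gamma}.$$ Moreover, if $\gamma\ge a_n-a_{n+1}$ for all $n\in\mathbb{N}$, then $(h(\phi_n))_{n\in\mathbb{N}}$ is non-increasing.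
   Context: $\Phi_{lsc}^{\mathbb{R}}=\{\phi=(a,u)\in\mathbb{R}\times X\}$ with $\phi(x)=-a\|x\|^2+\langle u,x\rangle$, identified with the Hilbert space $\mathbb{R}\times X$ (inner product $ab+\langle u,v\rangle$). The $X$-subdifferential of $h$ at $\psi$ is $\partial_Xh(\psi)=\{w\in X: h(\phi)-h(\psi)\ge\phi(w)-\psi(w)\ \forall\phi\in\Phi_{lsc}^{\mathbb{R}}\}$. Algorithm: choose $\gamma>0$, $\phi_0=(a_0,u_0)$. For $n\in\mathbb{N}$: find $\phi_{n+1}=(a_{n+1},u_{n+1})$ with $\frac{u_n-u_{n+1}}{\gamma}\in\partial_Xh(\phi_{n+1})$; if no such $\phi_{n+1}$ exists, return $\phi_n$. *)

From HB Require Import structures.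
From mathcomp Require Import all_boot all_order all_algebra.
From mathcomp Require Import all_classical all_reals all_analysis.
Set Implicit Arguments. Unset Strict Implicit. Unset Printing Implicit Defensive.
Import Order.TTheory GRing.Theory Num.Theory.
Import numFieldNormedType.Exports.
Local Open Scope classical_set_scope.
Local Open Scope ring_scope.

Definition hilbert_inner (R : realType) (X : normedModType R)
  (ip : X -> X -> R) : Prop :=
  [/\ forall x y, ip x y = ip y x,
      forall (k : R) x y z, ip (k *: x + y) z = k * ip x z + ip y z
    & forall x, ip x x = `|x| ^+ 2].

Definition phi_eval (R : realType) (X : normedModType R)
  (ip : X -> X -> R) (p : R * X) (x : X) : R :=
  - p.1 * `|x| ^+ 2 + ip p.2 x.

(* X-subdifferential of h at psi:
   { w | h(phi) - h(psi) >= phi(w) - psi(w) for all phi },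
   written additively to avoid +oo - +oo. *)
Definition Xsubdiff (R : realType) (X : normedModType R)
  (ip : X -> X -> R) (h : R * X -> \bar R) (psi : R * X) : set X :=
  [set w | forall phi : R * X,
     (h psi + (phi_eval ip phi w - phi_eval ip psi w)%:E <= h phi)%E].

Definition proper_fun (R : realType) (T : Type) (h : T -> \bar R) : Prop :=
  (forall t, h t != -oo)%E /\ (exists t, h t != +oo)%E.

Definition bounded_below (R : realType) (T : Type) (h : T -> \bar R) : Prop :=
  exists m : R, forall t, (m%:E <= h t)%E.

Definition prox_sequence (R : realType) (X : normedModType R)
  (ip : X -> X -> R) (h : R * X -> \bar R) (gamma : R) (phi0 : R * X)
  (phi : nat -> R * X) : Prop :=
  phi 0%N = phi0 /\
  forall n, Xsubdiff ip h (phi n.+1) (gamma^-1 *: ((phi n).2 - (phi n.+1).2)).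

From mathcomp Require Import all_boot all_order all_algebra.
From mathcomp Require Import all_classical all_reals all_analysis.
From mathcomp Require Import ring lra.
Set Implicit Arguments. Unset Strict Implicit. Unset Printing Implicit Defensive.
Import Order.TTheory GRing.Theory Num.Theory.
Import numFieldNormedType.Exports.
Local Open Scope ring_scope.

(* Instantiate the subgradient inequality defining phi_{n+1} at an arbitrary
   phi = (a, u).  With d = u_n - u_{n+1} and w = d / gamma,
   phi(w) - phi_{n+1}(w) = (a_{n+1} - a) |d|^2 / gamma^2 + <u - u_{n+1}, d> / gamma,
   and expanding |u - u_n|^2 = |(u - u_{n+1}) - d|^2 shows that this is exactly
   the claimed lower bound.  For phi = phi_n the bound becomes
   (1 - (a_n - a_{n+1}) / gamma) |d|^2 / gamma, which is nonnegative when
   gamma >= a_n - a_{n+1}. *)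

Section InnerProduct.
Variables (R : realType) (X : normedModType R) (ip : X -> X -> R).
Hypothesis ipH : hilbert_inner ip.

Lemma ipDl x y z : ip (x + y) z = ip x z + ip y z.
Proof. by case: ipH => _ ipL _; rewrite -(scale1r x) ipL mul1r scale1r. Qed.

Lemma ip0l z : ip 0 z = 0.
Proof. by have := ipDl 0 0 z; rewrite addr0; lra. Qed.

Lemma ipZl k x z : ip (k *: x) z = k * ip x z.
Proof. by case: ipH => _ ipL _; rewrite -[k *: x]addr0 ipL ip0l addr0. Qed.

Lemma ipBl x y z : ip (x - y) z = ip x z - ip y z.
Proof. by rewrite ipDl -scaleN1r ipZl mulN1r. Qed.

Lemma ipZr k x z : ip z (k *: x) = k * ip z x.
Proof. by case: ipH => ipC _ _; rewrite !(ipC z) ipZl. Qed.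

Lemma sqr_normB x y : `|x - y| ^+ 2 = `|x| ^+ 2 - 2 * ip x y + `|y| ^+ 2.
Proof.
case: ipH => ipC _ ipN.
by rewrite -!ipN !ipBl ![ip _ (_ - _)]ipC !ipBl (ipC x y); ring.
Qed.

Lemma phi_evalB p q w :
  phi_eval ip p w - phi_eval ip q w = (q.1 - p.1) * `|w| ^+ 2 + ip (p.2 - q.2) w.
Proof. by rewrite /phi_eval ipBl; ring. Qed.

Lemma phi_eval_prox_stepB (gamma : R) (u0 : X) (p q : R * X) :
  gamma != 0 ->
  phi_eval ip p (gamma^-1 *: (u0 - q.2)) - phi_eval ip q (gamma^-1 *: (u0 - q.2))
  = (2 * gamma)^-1 * (`|p.2 - q.2| ^+ 2 - `|p.2 - u0| ^+ 2)
    + (1 - 2 * (p.1 - q.1) / gamma) * (`|u0 - q.2| ^+ 2 / (2 * gamma)).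
Proof.
move=> gamma_neq0.
rewrite phi_evalB normrZ exprMn (real_normK (num_real gamma^-1)) ipZr.
have -> : p.2 - u0 = (p.2 - q.2) - (u0 - q.2) by rewrite opprB addrA subrK.
rewrite (sqr_normB (p.2 - q.2)).
by field.
Qed.

End InnerProduct.

Lemma prox_step_ineq (R : realType) (X : normedModType R) (ip : X -> X -> R)
    (h : R * X -> \bar R) (gamma : R) (u0 : X) (q p : R * X) :
  hilbert_inner ip -> gamma != 0 ->
  Xsubdiff ip h q (gamma^-1 *: (u0 - q.2)) ->
  (h q + ((2 * gamma)^-1 * (`|p.2 - q.2| ^+ 2 - `|p.2 - u0| ^+ 2)
          + (1 - 2 * (p.1 - q.1) / gamma) * (`|u0 - q.2| ^+ 2 / (2 * gamma)))%:E
   <= h p)%E.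
Proof. by move=> ipH gamma_neq0 /(_ p); rewrite phi_eval_prox_stepB. Qed.

Lemma prox_step_gain_ge0 (R : realFieldType) (gamma c N : R) :
  0 < gamma -> c <= gamma -> 0 <= N ->
  0 <= (2 * gamma)^-1 * N + (1 - 2 * c / gamma) * (N / (2 * gamma)).
Proof.
move=> gamma_gt0 c_le N_ge0.
have -> : (2 * gamma)^-1 * N + (1 - 2 * c / gamma) * (N / (2 * gamma))
          = (N / gamma) * ((gamma - c) / gamma).
  by field; exact: lt0r_neq0.
by rewrite mulr_ge0 ?divr_ge0 ?subr_ge0 // ltW.
Qed.

Theorem proposition5 (R : realType) (X : completeNormedModType R)
  (ip : X -> X -> R) (h : R * X -> \bar R) (gamma : R) (phi0 : R * X)
  (phi : nat -> R * X) :
  hilbert_inner ip ->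
  proper_fun h -> lower_semicontinuous h -> bounded_below h ->
  0 < gamma ->
  prox_sequence ip h gamma phi0 phi ->
  (forall (n : nat) (p : R * X),
     (h (phi n.+1) +
      ((2 * gamma)^-1 * (`|p.2 - (phi n.+1).2| ^+ 2 - `|p.2 - (phi n).2| ^+ 2)
       + (1 - 2 * (p.1 - (phi n.+1).1) / gamma)
         * (`|(phi n).2 - (phi n.+1).2| ^+ 2 / (2 * gamma)))%:E
      <= h p)%E)
  /\ ((forall n : nat, (phi n).1 - (phi n.+1).1 <= gamma) ->
      forall n : nat, (h (phi n.+1) <= h (phi n))%E).
Proof.
move=> ipH _ _ _ gamma_gt0 [_ phi_step].
have gamma_neq0 : gamma != 0 by rewrite gt_eqF.
have ineq n p := prox_step_ineq p ipH gamma_neq0 (phi_step n).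
split; first exact: ineq.
move=> gamma_ge n.
apply: le_trans (ineq n (phi n)).
rewrite leeDl // lee_fin subrr normr0 expr0n subr0.
exact: prox_step_gain_ge0 gamma_gt0 (gamma_ge n) (sqr_ge0 _).
Qed.
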